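(* Let $(X,\mathbb{Z}^k,T)$ be a $\mathbb{Z}^k$-action, let $d$ be a compatible metric on $X$, let $1\le h\le k$, and let $V\subseteq\mathbb{R}^k$ be an $h$-dimensional linear subspace. Then the quantity $$\lim_{\epsilon\to0}\ \liminf_{N\to\infty}\frac{\mathrm{Widim}_\epsilon\big(X,d^T_{B_r(V)\cap[-N,N]^k}\big)}{\mathrm{vol}_h\big(V\cap[-N,N]^k\big)}$$ is the same for every $r>\sqrt{k}/2$.
   Context: A $\mathbb{Z}^k$-action $(X,\mathbb{Z}^k,T)$ is a compact metric space with a continuous action $T\colon\mathbb{Z}^k\times X\to X$, $(n,x)\mapsto T^nx$. An $\epsilon$-embedding of $(X,d)$ is a continuous $f\colon X\to Y$ with $f(x)=f(x')\Rightarrow d(x,x')<\epsilon$. $\mathrm{Widim}_\epsilon(X,d)$ is the minimal topological dimension of a compact metric space $K$ admitting an $\epsilon$-embedding $X\to K$. $d^T_\Omega(x,x')=\max_{n\in\Omega}d(T^nx,T^nx')$ for finite $\Omega\subset\mathbb{Z}^k$. $B_r(V)=\{u\in\mathbb{Z}^k: |u-w|<r\text{ for some }w\in V\}$. $[-N,N]^k$ is the integer cube, or the real cube when intersected with $V$. $\mathrm{vol}_h$ is $h$-dimensional volume in $V$. *)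

From HB Require Import structures.
From mathcomp Require Import all_boot all_order all_algebra.
From mathcomp Require Import all_classical all_reals all_analysis.
Set Implicit Arguments. Unset Strict Implicit. Unset Printing Implicit Defensive.
Import Order.TTheory GRing.Theory Num.Theory.
Local Open Scope classical_set_scope.
Local Open Scope ring_scope.

Section Defs.
Variable R : realType.

Definition compatible_metric (X : topologicalType) (d : X -> X -> R) : Prop :=
  [/\ (forall x y, 0 <= d x y),
      (forall x y, d x y = 0 <-> x = y),
      (forall x y, d x y = d y x),
      (forall x y z, d x z <= d x y + d y z) &
      (forall A : set X, open A <->
         (forall x, A x -> exists2 e : R, 0 < e & [set y | d x y < e] `<=` A))].

Definition compact_metrizable (K : topologicalType) : Prop :=
  compact [set: K] /\ exists dK : K -> K -> R, compatible_metric dK.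

(* dim K <= n : every finite open cover has a finite open refinement
   of order <= n (each point lies in at most n+1 members). *)
Definition covdim_le (K : topologicalType) (n : nat) : Prop :=
  forall (I : finType) (U : I -> set K),
    (forall i, open (U i)) -> (forall x, exists i, U i x) ->
    exists (J : finType) (W : J -> set K),
      [/\ (forall j, open (W j)), (forall x, exists j, W j x),
          (forall j, exists i, W j `<=` U i) &
          (forall x, (#|[pred j | `[< W j x >]]| <= n.+1)%N)].

Definition eps_embedding (X K : topologicalType) (rho : X -> X -> R) (eps : R)
    (f : X -> K) : Prop :=
  continuous f /\ forall x x', f x = f x' -> rho x x' < eps.

Definition Widim (X : topologicalType) (rho : X -> X -> R) (eps : R) : \bar R :=
  ereal_inf [set (n%:R)%:E | n in
    [set n : nat | exists (K : topologicalType) (f : X -> K),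
        compact_metrizable K /\ covdim_le K n /\ eps_embedding rho eps f]].

Definition Zk_action (k : nat) (X : topologicalType)
    (T : 'rV[int]_k -> X -> X) : Prop :=
  [/\ (forall x, T 0 x = x),
      (forall m n x, T (m + n) x = T m (T n x)) &
      (forall n, continuous (T n))].

Definition enorm (k : nat) (v : 'rV[R]_k) : R :=
  Num.sqrt (\sum_(i < k) v ord0 i ^+ 2).

Definition inBr (k : nat) (V : {vspace 'rV[R]_k}) (r : R) (u : 'rV[int]_k) : Prop :=
  exists2 w : 'rV[R]_k, w \in V & enorm (map_mx (fun z : int => z%:~R) u - w) < r.

(* enumeration of the integer cube [-N,N]^k *)
Definition cube_pt (k N : nat) (c : {ffun 'I_k -> 'I_(N.*2.+1)}) : 'rV[int]_k :=
  \row_i ((c i : nat)%:Z - N%:Z).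

(* d^T_Omega with Omega = B_r(V) \cap [-N,N]^k (a finite set containing 0) *)
Definition dT_Omega (k : nat) (X : topologicalType) (d : X -> X -> R)
    (T : 'rV[int]_k -> X -> X) (V : {vspace 'rV[R]_k}) (r : R) (N : nat)
    (x x' : X) : R :=
  \big[Num.max/0]_(c : {ffun 'I_k -> 'I_(N.*2.+1)} | `[< inBr V r (cube_pt c) >])
     d (T (cube_pt c) x) (T (cube_pt c) x').

Definition Vcube (k : nat) (V : {vspace 'rV[R]_k}) (N : nat) : set 'rV[R]_k :=
  [set w | w \in V /\ forall i, `|w ord0 i| <= N%:R].

Fixpoint iint (n : nat) (g : seq R -> \bar R) : \bar R :=
  match n with
  | 0 => g [::]
  | n'.+1 => (\int[@lebesgue_measure R]_(t in [set: R]) iint n' (fun s => g (t :: s)))%E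
  end.

Definition Vparam (k : nat) (V : {vspace 'rV[R]_k}) (t : seq R) : 'rV[R]_k :=
  \sum_(i < \dim V) nth 0 t i *: tnth (vbasis V) i.

Definition Vgram (k : nat) (V : {vspace 'rV[R]_k}) : 'M[R]_(\dim V) :=
  \matrix_(i, j) (tnth (vbasis V) i *m (tnth (vbasis V) j)^T) ord0 ord0.

(* vol_h(S) for S \subset V (h = \dim V): area formula
   sqrt(det Gram) * int_{R^h} 1_S(sum_i t_i b_i) dt *)
Definition volV (k : nat) (V : {vspace 'rV[R]_k}) (S : set 'rV[R]_k) : \bar R :=
  ((Num.sqrt (\det (Vgram V)))%:E *
     iint (\dim V) (fun t => (\1_S (Vparam V t))%:E))%E.

Definition widim_ratio_liminf (k : nat) (X : topologicalType) (d : X -> X -> R)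
    (T : 'rV[int]_k -> X -> X) (V : {vspace 'rV[R]_k}) (r eps : R) : \bar R :=
  limn_einf (fun N : nat =>
    (Widim (dT_Omega d T V r N) eps * ((fine (volV V (Vcube V N)))^-1)%:E)%E).

End Defs.

From HB Require Import structures.
From mathcomp Require Import all_boot all_order all_algebra.
From mathcomp Require Import all_classical all_reals all_analysis.
From mathcomp Require Import ring lra zify.
Set Implicit Arguments. Unset Strict Implicit. Unset Printing Implicit Defensive.
Import Order.TTheory GRing.Theory Num.Theory.
Local Open Scope classical_set_scope.
Local Open Scope ring_scope.

(* Write g_r(eps) for the liminf.  Widim_eps can only grow when eps shrinks, so
   g_r is nonincreasing and g_r(eps) converges, as eps -> 0+, to its supremum
   over eps > 0.  It remains to see that sup g_r2 <= sup g_r1 when r1 > sqrt(k)/2.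
   - Geometry (lattice_approximation): every lattice point of B_r2(V) /\ [-N,N]^k
     lies within sup-distance M of a lattice point of B_r1(V) /\ [-N,N]^k, with M
     independent of N; shrink the witness in V by N/(N+r2), then round it.
   - Dynamics (dT_Omega_compare): since T^u = T^(u-z) o T^z with u-z in the fixed
     finite cube [-M,M]^k, and finitely many continuous maps on a compact metric
     space are uniformly equicontinuous, for every e > 0 some delta > 0 gives
     d^T_{Omega_r1} < delta ==> d^T_{Omega_r2} < e, for all N at once.
   Consequently Widim_e(d^T_{Omega_r2}) <= Widim_delta(d^T_{Omega_r1}), hence
   g_r2(e) <= g_r1(delta), and the suprema compare. *)

Section CompatibleMetric.
Variables (R : realType) (X : topologicalType) (d : X -> X -> R).
Hypothesis dc : compatible_metric d.

Lemma open_dball x e : open [set y | d x y < e].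
Proof.
case: dc => _ _ _ dtri dopen; apply/dopen => y /= dxy.
exists (e - d x y); first by rewrite subr_gt0.
by move=> z /= dyz; have := dtri x y z; lra.
Qed.

Lemma nbhs_dball x e : 0 < e -> nbhs x [set y | d x y < e].
Proof.
move=> e0; apply: open_nbhs_nbhs; split; first exact: open_dball.
by case: dc => _ dE _ _ _ /=; rewrite (proj2 (dE x x) erefl).
Qed.

Lemma dball_sub_nbhs x A :
  nbhs x A -> exists2 e, 0 < e & [set y | d x y < e] `<=` A.
Proof.
case: dc => _ _ _ _ dopen; rewrite nbhsE => -[B [oB Bx] BA].
have [e e0 eB] := (proj1 (dopen B) oB) x Bx.
by exists e => // y /eB /BA.
Qed.

End CompatibleMetric.

Section UniformContinuity.
Variables (R : realType) (X Y : topologicalType).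
Variables (dX : X -> X -> R) (dY : Y -> Y -> R).
Hypotheses (cX : compact [set: X]) (dXc : compatible_metric dX).
Hypothesis dYc : compatible_metric dY.

Lemma uniform_continuity (g : X -> Y) : continuous g ->
  forall e, 0 < e -> exists2 δ, 0 < δ & forall a b, dX a b < δ -> dY (g a) (g b) < e.
Proof.
move=> gc e e0; case: (dXc) => _ _ dXsym dXtri _; case: (dYc) => _ _ dYsym dYtri _.
have : \forall δ \near 0^'+, [set: X] `<=` [set a | forall b, dX a b < δ -> dY (g a) (g b) < e].
  apply: (proj1 (compact_near_coveringP _) cX) => x _.
  have [η η0 ηball] : exists2 η, 0 < η &
      [set y | dX x y < η] `<=` g @^-1` [set z | dY (g x) z < e / 2].
    by apply: dball_sub_nbhs => //; apply: gc; apply: nbhs_dball => //; lra.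
  exists ([set y | dX x y < η / 2], [set δ | 0 < δ < η / 2]).
    split => /=; first by apply: nbhs_dball => //; lra.
    exists (η / 2) => /=; first lra.
    by move=> y /= + y0; rewrite sub0r normrN gtr0_norm //; lra.
  move=> [x' δ] /= [dxx' /andP[δ0 δη]] b dx'b.
  have /= gxb : dY (g x) (g b) < e / 2 by apply: ηball => /=; have := dXtri x x' b; lra.
  have /= gxx' : dY (g x) (g x') < e / 2 by apply: ηball => /=; lra.
  by rewrite dYsym in gxx'; have := dYtri (g x') (g x) (g b); lra.
move=> /(filterI (nbhs_right_gt 0)) /filter_ex [δ [δ0 Hδ]].
by exists δ => // a b; apply: Hδ.
Qed.

Lemma uniform_equicontinuity (I : finType) (g : I -> X -> Y) :
  (forall i, continuous (g i)) ->
  forall e, 0 < e -> exists2 δ, 0 < δ &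
    forall i a b, dX a b < δ -> dY (g i a) (g i b) < e.
Proof.
move=> gc e e0.
suff [δ δ0 Hδ] : exists2 δ, 0 < δ &
    forall i, i \in enum I -> forall a b, dX a b < δ -> dY (g i a) (g i b) < e.
  by exists δ => // i; apply: Hδ; rewrite mem_enum.
elim: (enum I) => [|j s [δ δ0 Hδ]]; first by exists 1.
have [δj δj0 Hj] := uniform_continuity (gc j) e0.
exists (Num.min δ δj); first by rewrite lt_min δ0 δj0.
move=> i; rewrite inE => /orP[/eqP -> | iS] a b; rewrite lt_min => /andP[abδ abδj].
  exact: Hj.
exact: Hδ.
Qed.

End UniformContinuity.

Lemma limn_einf_le (R : realType) (u v : (\bar R)^nat) :
  (forall n, (u n <= v n)%E) -> (limn_einf u <= limn_einf v)%E.
Proof.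
move=> uv; rewrite !limn_einf_lim.
apply: lee_lim; [exact: is_cvg_einfs | exact: is_cvg_einfs |].
apply: nearW => n; apply: le_ereal_inf_tmp => _ [m nm <-].
by apply: le_trans (uv m); apply: ereal_inf_lbound; exists m.
Qed.

(* Widim is antitone in the pair (metric, scale): an e1-embedding for rho1 is an
   e2-embedding for rho2 as soon as rho1 < e1 forces rho2 < e2. *)
Lemma Widim_le (R : realType) (X : topologicalType) (rho1 rho2 : X -> X -> R)
    (e1 e2 : R) :
  (forall x x', rho1 x x' < e1 -> rho2 x x' < e2) ->
  (Widim rho2 e2 <= Widim rho1 e1)%E.
Proof.
move=> rho12; apply: ereal_inf_le_tmp; apply: image_subset.
move=> n [K [f [cK [dimK [fc fe]]]]]; exists K, f; split=> //; split=> //; split=> //.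
by move=> x x' /fe /rho12.
Qed.

Section EuclideanNorm.
Variables (R : realType) (k : nat).

Lemma coord_le_enorm (a : 'rV[R]_k) i : `|a ord0 i| <= enorm a.
Proof.
rewrite /enorm -sqrtr_sqr ler_sqrt; last by apply: sumr_ge0 => j _; exact: sqr_ge0.
by rewrite (bigD1 i) //= lerDl; apply: sumr_ge0 => j _; exact: sqr_ge0.
Qed.

Lemma enorm_le_half (a : 'rV[R]_k) :
  (forall i, `|a ord0 i| <= 1 / 2) -> enorm a <= Num.sqrt (k%:R) / 2.
Proof.
move=> a_half; have q0 : 0 <= Num.sqrt (k%:R : R) / 2.
  by apply: divr_ge0 => //; exact: sqrtr_ge0.
rewrite /enorm -[leRHS](ger0_norm q0) -sqrtr_sqr ler_sqrt; last exact: sqr_ge0.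
rewrite expr_div_n sqr_sqrtr //.
have -> : (k%:R : R) / 2 ^+ 2 = \sum_(i < k) (1 / 4 : R).
  by rewrite sumr_const card_ord -mulr_natl; field.
apply: ler_sum => i _; have := a_half i; rewrite ler_norml => /andP[? ?]; nra.
Qed.

End EuclideanNorm.

Lemma round_half (R : realType) (x : R) : `|(Num.floor (x + 1 / 2))%:~R - x| <= 1 / 2.
Proof.
have := floor_itv (x + 1 / 2); rewrite intrD => /andP[? ?].
by rewrite ler_norml; apply/andP; split; lra.
Qed.

Lemma int_near_le (R : realType) (z : int) (x : R) (N : nat) :
  `|x| <= N%:R -> `|z%:~R - x| <= 1 / 2 -> `|z| <= N%:Z.
Proof.
rewrite !ler_norml => /andP[? ?] /andP[? ?]; apply/andP; split.
  by rewrite -ltzD1 -(ltr_int R) intrD intrN; lra.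
by rewrite -ltzD1 -(ltr_int R) intrD; lra.
Qed.

Lemma shrink_coord (R : realType) (N r x y : R) :
  0 <= N -> 0 < r -> `|x| <= N -> `|x - y| < r ->
  `|N / (N + r) * y| <= N /\ `|x - N / (N + r) * y| < 2 * r.
Proof.
move=> N0 r0; rewrite ler_norml ltr_norml => /andP[? ?] /andP[? ?].
set s := N / (N + r).
have s0 : 0 <= s by apply: divr_ge0 => //; lra.
have sE : s * (N + r) = N by rewrite /s mulfVK //; apply/negP => /eqP; lra.
have s1 : s <= 1 by nra.
have ? : 0 <= s * (N + r - y) by apply: mulr_ge0 => //; lra.
have ? : 0 <= s * (y + N + r) by apply: mulr_ge0 => //; lra.
have ? : 0 <= (1 - s) * (N + r - y) by apply: mulr_ge0 => //; lra.
have ? : 0 <= (1 - s) * (y + N + r) by apply: mulr_ge0 => //; lra.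
by rewrite ler_norml ltr_norml; split; apply/andP; split; nra.
Qed.

Definition in_int_cube (k N : nat) (u : 'rV[int]_k) : Prop :=
  forall i, `|u ord0 i| <= N%:Z.

Lemma cube_pt_in_cube k N (c : {ffun 'I_k -> 'I_(N.*2.+1)}) :
  in_int_cube N (cube_pt c).
Proof.
move=> i; rewrite mxE; case: (c i) => [m /= hm].
by rewrite ler_norml; apply/andP; split; lia.
Qed.

Lemma cube_pt_onto k N (z : 'rV[int]_k) :
  in_int_cube N z -> exists c : {ffun 'I_k -> 'I_(N.*2.+1)}, cube_pt c = z.
Proof.
move=> zN; exists [ffun i => inord (absz (z ord0 i + N%:Z))].
apply/rowP => i; rewrite !mxE ffunE inordK; have := zN i; rewrite (_ : ord0 = 0) //; lia.
Qed.

Lemma lattice_approximation (R : realType) k (V : {vspace 'rV[R]_k}) (r1 r2 : R) :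
  Num.sqrt (k%:R) / 2 < r1 ->
  exists M : nat, forall (N : nat) (u : 'rV[int]_k),
    in_int_cube N u -> inBr V r2 u ->
    exists2 z : 'rV[int]_k, in_int_cube N z /\ inBr V r1 z & in_int_cube M (u - z).
Proof.
move=> r1_big; exists (Num.truncn (2 * r2 + 1)).+1 => N u uN [w wV uw].
have r2_gt0 : 0 < r2 by apply: le_lt_trans uw; exact: sqrtr_ge0.
set s : R := N%:R / (N%:R + r2).
pose z : 'rV[int]_k := \row_i Num.floor (s * w ord0 i + 1 / 2).
have shrunk i : `|s * w ord0 i| <= N%:R /\ `|(u ord0 i)%:~R - s * w ord0 i| < 2 * r2.
  apply: shrink_coord => //; first by have := uN i; rewrite -(ler_int R) intr_norm.
  by have := coord_le_enorm (map_mx (fun z : int => z%:~R) u - w) i; rewrite !mxE; lra.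
have rounded i : `|(z ord0 i)%:~R - s * w ord0 i| <= 1 / 2 by rewrite mxE round_half.
exists z; first split.
- by move=> i; apply: int_near_le (rounded i); case: (shrunk i).
- exists (s *: w); first exact: memvZ.
  by apply: le_lt_trans r1_big; apply: enorm_le_half => i; have := rounded i; rewrite !mxE.
- move=> i; have -> : (u - z) ord0 i = u ord0 i - z ord0 i by rewrite !mxE.
  rewrite -(ler_int R) intr_norm intrB.
  have := truncnS_gt (2 * r2 + 1); have [_] := shrunk i; have := rounded i.
  by rewrite !ler_norml !ltr_norml => /andP[? ?] /andP[? ?] ?; apply/andP; split; lra.
Qed.

Lemma dT_Omega_compare (R : realType) k (X : topologicalType)
    (T : 'rV[int]_k -> X -> X) (d : X -> X -> R) (V : {vspace 'rV[R]_k}) (r1 r2 : R) :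
  compact [set: X] -> Zk_action T -> compatible_metric d ->
  Num.sqrt (k%:R) / 2 < r1 ->
  forall e, 0 < e -> exists2 δ, 0 < δ & forall N x x',
    dT_Omega d T V r1 N x x' < δ -> dT_Omega d T V r2 N x x' < e.
Proof.
move=> cX [_ TD Tc] dc r1_big e e0.
have [M approx] := lattice_approximation V r2 r1_big.
have [δ δ0 equi] := uniform_equicontinuity cX dc dc
  (fun c : {ffun 'I_k -> 'I_(M.*2.+1)} => Tc (cube_pt c)) e0.
exists δ => // N x x' small; apply: bigmax_lt => // c /asboolP uc.
have [z [zN zr1] uzM] := approx N _ (cube_pt_in_cube c) uc.
have [cz czE] := cube_pt_onto zN; have [cuz cuzE] := cube_pt_onto uzM.
have -> : cube_pt c = cube_pt cuz + cube_pt cz by rewrite cuzE czE subrK.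
rewrite !TD; apply: equi; apply: le_lt_trans small.
by apply: le_bigmax_cond; apply/asboolP; rewrite czE.
Qed.

(* The volume normalisation 1 / vol_h(V /\ [-N,N]^k) is nonnegative, so the
   ratios are monotone in Widim. *)
Lemma iint_ge0 (R : realType) n (g : seq R -> \bar R) :
  (forall s, (0 <= g s)%E) -> (0 <= iint n g)%E.
Proof.
elim: n g => [|n IH] g g0 /=; first exact: g0.
by apply: integral_ge0 => t _; apply: IH.
Qed.

Lemma inv_volV_ge0 (R : realType) k (V : {vspace 'rV[R]_k}) N :
  0 <= (fine (volV V (Vcube V N)))^-1.
Proof.
rewrite invr_ge0; apply: fine_ge0; apply: mule_ge0; first by rewrite lee_fin sqrtr_ge0.
by apply: iint_ge0 => s; rewrite lee_fin indicE; case: (_ \in _).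
Qed.

Section WidimRatio.
Variables (R : realType) (k : nat) (X : topologicalType).
Variables (T : 'rV[int]_k -> X -> X) (d : X -> X -> R) (V : {vspace 'rV[R]_k}).

Local Notation g := (widim_ratio_liminf d T V).

(* The limit of g_r at 0+: the supremum of g_r over eps > 0. *)
Definition widim_ratio_sup (r : R) : \bar R :=
  ereal_sup [set g r eps | eps in [set` Interval (BRight 0) (BInfty R false)]].

Lemma widim_ratio_le (r r' e e' : R) :
  (forall N x x', dT_Omega d T V r' N x x' < e' -> dT_Omega d T V r N x x' < e) ->
  (g r e <= g r' e')%E.
Proof.
move=> cmp; apply: limn_einf_le => N; apply: lee_wpmul2r.
  by rewrite lee_fin inv_volV_ge0.
by apply: Widim_le => x x'; apply: cmp.
Qed.

(* g_r is nonincreasing, hence converges at 0+ to its supremum. *)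
Lemma widim_ratio_cvg r : g r eps @[eps --> 0^'+] --> widim_ratio_sup r.
Proof.
apply: nonincreasing_at_right_cvge => // e e' _ _ ee'.
by apply: widim_ratio_le => N x x' /lt_le_trans; apply.
Qed.

Lemma widim_ratio_sup_le (r1 r2 : R) :
  compact [set: X] -> Zk_action T -> compatible_metric d ->
  Num.sqrt (k%:R) / 2 < r1 -> (widim_ratio_sup r2 <= widim_ratio_sup r1)%E.
Proof.
move=> cX TA dc r1_big; apply: ge_ereal_sup => _ [e /= + <-].
rewrite in_itv /= andbT => e0.
have [δ δ0 cmp] := dT_Omega_compare V r2 cX TA dc r1_big e0.
apply: le_trans (widim_ratio_le cmp) _; apply: ereal_sup_ubound.
by exists δ => //=; rewrite in_itv /= δ0.
Qed.

End WidimRatio.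

Theorem proposition3p1 (R : realType) (k h : nat) (X : topologicalType)
    (T : 'rV[int]_k -> X -> X) (d : X -> X -> R) (V : {vspace 'rV[R]_k}) :
  compact [set: X] -> Zk_action T -> compatible_metric d ->
  (1 <= h)%N -> (h <= k)%N -> \dim V = h ->
  forall r1 r2 : R, Num.sqrt (k%:R) / 2 < r1 -> Num.sqrt (k%:R) / 2 < r2 ->
  exists L : \bar R,
    widim_ratio_liminf d T V r1 eps @[eps --> 0^'+] --> L /\
    widim_ratio_liminf d T V r2 eps @[eps --> 0^'+] --> L.
Proof.
move=> cX TA dc _ _ _ r1 r2 r1_big r2_big.
exists (widim_ratio_sup T d V r1); split; first exact: widim_ratio_cvg.
have -> : widim_ratio_sup T d V r1 = widim_ratio_sup T d V r2.
  by apply: le_anti; rewrite !widim_ratio_sup_le.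
exact: widim_ratio_cvg.
Qed.
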